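(* Let $\mathscr G=(\mathscr V,\mathscr E)$ be a finite connected graph with $N$ vertices, let $M\ge 0$ be an integer, and let $(Y_t)_{t\in\mathbb N}$ be the immediate exchange model on $\mathscr G$ with $M$ coins, started from an arbitrary configuration. Then for every vertex $x\in\mathscr V$ and every $c\in\{0,1,\dots,M\}$, $$\lim_{t\to\infty}P(Y_t(x)=c)=(c+1)\binom{M-c+2N-3}{2N-3}\Big/\binom{M+2N-1}{2N-1}.$$ In particular, when $N$ and $T=M/N$ are large, $\lim_{t\to\infty}P(Y_t(x)=c)\approx \frac{4c}{T^2} e^{-2c/T}$.
   Context: A configuration is a map $\xi:\mathscr V\to\mathbb N$; $\mathscr C_{N,M}$ denotes the set of configurations with $\sum_x\xi(x)=M$. The immediate exchange model is the discrete-time Markov chain on $\mathscr C_{N,M}$ evolving as follows: at each time step $t$, an edge $(x,y)\in\mathscr E$ is chosen uniformly at random, independent random variables $U_1$ uniform on $\{0,1,\dots,Y_t(x)\}$ and $U_2$ uniform on $\{0,1,\dots,Y_t(y)\}$ are drawn, and one sets $Y_{t+1}(x)=Y_t(x)-U_1+U_2$, $Y_{t+1}(y)=Y_t(y)-U_2+U_1$, and $Y_{t+1}(z)=Y_t(z)$ for $z\notin\{x,y\}$. *)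

From HB Require Import structures.
From mathcomp Require Import all_boot all_order all_algebra.
From mathcomp Require Import all_classical all_reals.
From mathcomp Require Import topology normedtype sequences.
Set Implicit Arguments. Unset Strict Implicit. Unset Printing Implicit Defensive.
Import Order.TTheory GRing.Theory Num.Theory.
Local Open Scope ring_scope.

(* A configuration with at most M coins per site: xi : V -> {0,...,M}.
   The set C_{N,M} is the subset of those with total mass M. *)
Definition conf (V : finType) (M : nat) := {ffun V -> 'I_M.+1}.

Definition in_CNM (V : finType) (M : nat) (xi : conf V M) : bool :=
  (\sum_(z : V) (xi z : nat) == M)%N.

(* Directed edges (ordered pairs of adjacent vertices). Since the dynamics
   is symmetric in (x,y), choosing uniformly an ordered pair is the same as
   choosing uniformly an undirected edge. *)
Definition edges (V : finType) (e : rel V) : {set V * V} :=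
  [set p : V * V | e p.1 p.2].

Definition upd (V : finType) (M : nat) (xi : conf V M) (x y : V) (u1 u2 : nat)
  : conf V M :=
  [ffun z => if z == x then inord ((xi x - u1) + u2)%N
             else if z == y then inord ((xi y - u2) + u1)%N
             else xi z].

Definition iem_kernel (R : realType) (V : finType) (e : rel V) (M : nat)
  (xi eta : conf V M) : R :=
  (#|edges e|%:R)^-1 *
  \sum_(p in edges e)
    \sum_(u1 < (xi p.1).+1) \sum_(u2 < (xi p.2).+1)
      (((xi p.1).+1 * (xi p.2).+1)%N%:R)^-1 *
      (upd xi p.1 p.2 u1 u2 == eta)%:R.

Fixpoint iem_law (R : realType) (V : finType) (e : rel V) (M : nat)
  (xi0 : conf V M) (t : nat) (eta : conf V M) : R :=
  match t with
  | 0 => (eta == xi0)%:R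
  | t'.+1 => \sum_(xi : conf V M) iem_law R e xi0 t' xi * iem_kernel R e xi eta
  end.

Definition iem_prob (R : realType) (V : finType) (e : rel V) (M : nat)
  (xi0 : conf V M) (x : V) (c : nat) (t : nat) : R :=
  \sum_(eta : conf V M | (eta x : nat) == c) iem_law R e xi0 t eta.

From HB Require Import structures.
From mathcomp Require Import all_boot all_order all_algebra.
From mathcomp Require Import all_classical all_reals.
From mathcomp Require Import topology normedtype sequences.
From mathcomp Require Import zify.
Set Implicit Arguments. Unset Strict Implicit. Unset Printing Implicit Defensive.
Import Order.TTheory GRing.Theory Num.Theory.
Import numFieldNormedType.Exports.
Local Open Scope ring_scope.
Local Open Scope classical_set_scope.

(* The weight w(xi) = prod_z (xi(z) + 1) is reversible for the exchange on every edge {a, b}: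
   w(xi) / ((xi(a) + 1) (xi(b) + 1)) only depends on the coins off {a, b}, and the draw
   (U1, U2) leading from xi to eta is undone by the draw (U2, U1) from eta.  So w, normalised
   on C_{N,M}, is a stationary law.  Sweeping all coins of a vertex to a neighbour closer to a
   fixed vertex x0, and holding once every coin sits at x0, reaches that configuration from
   anywhere within a fixed number of steps with probability bounded below; Doeblin's argument
   then gives geometric convergence in total variation.  Finally sum_{|xi| = M} w(xi) is the
   coefficient of X^M in (sum_j (j + 1) X^j)^N = (1 - X)^(-2N), i.e. C(M + 2N - 1, 2N - 1), and
   fixing xi(x) = c replaces one factor by (c + 1) X^c. *)

Lemma ler_sum_term (R : numDomainType) (I : finType) (P : pred I) (F : I -> R) i :
  P i -> (forall j, P j -> 0 <= F j) -> F i <= \sum_(j | P j) F j.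
Proof.
move=> Pi F_ge0; rewrite (bigD1 i) //= lerDl.
by apply: sumr_ge0 => j /andP[Pj _]; apply: F_ge0.
Qed.

Section FiniteMarkovChain.
Variables (R : realType) (T : finType) (K : T -> T -> R).
Hypothesis K_ge0 : forall x y, 0 <= K x y.
Hypothesis K_sum1 : forall x, \sum_y K x y = 1.

Definition mc_step (mu : T -> R) : T -> R := fun y => \sum_x mu x * K x y.
Definition mc_law (mu : T -> R) (t : nat) : T -> R := iter t mc_step mu.
Definition point_mass (x : T) : T -> R := fun y => (y == x)%:R.

Lemma sum_point_mass x : \sum_y point_mass x y = 1.
Proof. by rewrite (bigD1 x) //= /point_mass eqxx big1 ?addr0 // => y /negbTE ->. Qed.

Lemma mc_lawS mu t : mc_law mu t.+1 = mc_step (mc_law mu t).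
Proof. by []. Qed.

Lemma mc_lawD mu t s : mc_law mu (t + s) = mc_law (mc_law mu s) t.
Proof. exact: iterD. Qed.

Lemma mc_law_ge0 mu t y : (forall x, 0 <= mu x) -> 0 <= mc_law mu t y.
Proof.
move=> mu_ge0; elim: t y => [|t IH] y //; rewrite mc_lawS.
by apply: sumr_ge0 => x _; rewrite mulr_ge0.
Qed.

Lemma mc_law_sum mu t : \sum_y mc_law mu t y = \sum_x mu x.
Proof.
elim: t => [|t IH] //; rewrite mc_lawS /mc_step exchange_big /= -IH.
by apply: eq_bigr => x _; rewrite -mulr_sumr K_sum1 mulr1.
Qed.

Lemma mc_law_point_sum mu t y : mc_law mu t y = \sum_x mu x * mc_law (point_mass x) t y.
Proof.
elim: t y => [|t IH] y.
  rewrite /= (bigD1 y) //= /point_mass eqxx mulr1 big1 ?addr0 // => x.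
  by rewrite eq_sym => /negbTE ->; rewrite mulr0.
rewrite mc_lawS /mc_step; under eq_bigr => z _ do rewrite IH mulr_suml.
rewrite exchange_big /=; apply: eq_bigr => x _; rewrite mulr_sumr.
by apply: eq_bigr => z _; rewrite mulrA.
Qed.

Lemma mc_law_pointS x t y :
  mc_law (point_mass x) t.+1 y = \sum_z K x z * mc_law (point_mass z) t y.
Proof.
rewrite -addn1 mc_lawD mc_law_point_sum; apply: eq_bigr => z _; congr (_ * _).
rewrite mc_lawS /mc_step (bigD1 x) //= /point_mass eqxx mul1r big1 ?addr0 // => w.
by move=> /negbTE ->; rewrite mul0r.
Qed.

Lemma mc_lawB mu nu t y :
  mc_law (fun x => mu x - nu x) t y = mc_law mu t y - mc_law nu t y.
Proof.
rewrite (mc_law_point_sum mu) (mc_law_point_sum nu) mc_law_point_sum -sumrB.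
by apply: eq_bigr => x _; rewrite mulrBl.
Qed.

Lemma mc_law_stationary pi t : mc_step pi = pi -> mc_law pi t = pi.
Proof. by move=> pi_stat; elim: t => [|t IH] //; rewrite mc_lawS IH. Qed.

Lemma detailed_balance_stationary pi :
  (forall x y, pi x * K x y = pi y * K y x) -> mc_step pi = pi.
Proof.
move=> balance; apply: funext => y; rewrite /mc_step.
under eq_bigr => x _ do rewrite balance.
by rewrite -mulr_sumr K_sum1 mulr1.
Qed.

Lemma mc_step_l1 nu : \sum_y `|mc_step nu y| <= \sum_x `|nu x|.
Proof.
apply: (@le_trans _ _ (\sum_y \sum_x `|nu x| * K x y)).
  apply: ler_sum => y _; apply: (le_trans (ler_norm_sum _ _ _)).
  by apply: ler_sum => x _; rewrite normrM (ger0_norm (K_ge0 _ _)).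
rewrite exchange_big /=; apply: ler_sum => x _.
by rewrite -mulr_sumr K_sum1 mulr1.
Qed.

Lemma mc_law_l1_nonincr nu t s : (t <= s)%N ->
  \sum_y `|mc_law nu s y| <= \sum_y `|mc_law nu t y|.
Proof.
move=> /subnK <-; elim: (s - t)%N => [|n IH] //.
by rewrite addSn mc_lawS; apply: le_trans IH; apply: mc_step_l1.
Qed.

Section Doeblin.
Variables (A : pred T) (y0 : T) (k : nat) (dl : R).
Hypothesis minorization : forall x, A x -> dl <= mc_law (point_mass x) k y0.

(* Each row of the [k]-step kernel on [A] contains [dl] times the point mass at [y0];
   this common part is killed by a signed measure of mass zero. *)
Lemma doeblin_contraction nu : (forall x, ~~ A x -> nu x = 0) -> \sum_x nu x = 0 ->
  \sum_y `|mc_law nu k y| <= (1 - dl) * \sum_x `|nu x|.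
Proof.
move=> nu_supp nu_sum0.
pose Q x y := mc_law (point_mass x) k y - dl * point_mass y0 y.
have Q_ge0 x y : A x -> 0 <= Q x y.
  move=> Ax; rewrite /Q /point_mass; have [->|ne] := eqVneq y y0.
    by rewrite mulr1 subr_ge0 minorization.
  by rewrite mulr0 subr0 mc_law_ge0 // => z; rewrite ler0n.
have lawE y : mc_law nu k y = \sum_x nu x * Q x y.
  rewrite mc_law_point_sum; under [RHS]eq_bigr => x _ do rewrite mulrBr.
  by rewrite sumrB -mulr_suml nu_sum0 mul0r subr0.
have Q_sum x : \sum_y Q x y = 1 - dl.
  by rewrite /Q sumrB mc_law_sum sum_point_mass -mulr_sumr sum_point_mass mulr1.
apply: (@le_trans _ _ (\sum_y \sum_x `|nu x| * Q x y)).
  apply: ler_sum => y _; rewrite lawE; apply: (le_trans (ler_norm_sum _ _ _)).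
  apply: ler_sum => x _; have [Ax|nAx] := boolP (A x).
    by rewrite normrM (ger0_norm (Q_ge0 _ _ Ax)).
  by rewrite nu_supp // !(mul0r, normr0).
rewrite exchange_big /= mulr_sumr; apply: ler_sum => x _.
by rewrite -mulr_sumr Q_sum mulrC.
Qed.

End Doeblin.

Section DriftToPoint.
Variables (A : pred T) (phi : T -> nat) (y0 : T) (b : R).
Hypothesis b_ge0 : 0 <= b.
Hypothesis phi_y0 : phi y0 = 0%N.
Hypothesis hold_y0 : b <= K y0 y0.
Hypothesis descent : forall x, A x -> x != y0 ->
  exists2 x', A x' & (b <= K x x') && (phi x' < phi x)%N.

Lemma mc_law_point_ge_pow j x : A x -> (phi x <= j)%N ->
  b ^+ j <= mc_law (point_mass x) j y0.
Proof.
elim: j x => [|j IH] x Ax phi_x.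
  have -> : x = y0.
    apply/eqP; apply: contraT => x_neq_y0; move: phi_x; rewrite leqn0 => /eqP phi_x0.
    by have [x' _ /andP[_]] := descent Ax x_neq_y0; rewrite phi_x0.
  by rewrite /= /point_mass eqxx.
have via x' : A x' -> (phi x' <= j)%N -> b <= K x x' ->
    b ^+ j.+1 <= mc_law (point_mass x) j.+1 y0.
  move=> Ax' phi_x' b_le_K; rewrite mc_law_pointS exprS.
  apply: le_trans (ler_pM b_ge0 (exprn_ge0 _ b_ge0) b_le_K (IH _ Ax' phi_x')) _.
  apply: (ler_sum_term (P := xpredT)) => // z _.
  by rewrite mulr_ge0 // mc_law_ge0 // => w; rewrite ler0n.
have [x_y0 | x_neq_y0] := eqVneq x y0.
  by subst x; apply: (via y0); rewrite ?phi_y0.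
have [x' Ax' /andP[b_le_K lt_phi]] := descent Ax x_neq_y0.
by apply: (via x') => //; rewrite -ltnS (leq_trans lt_phi).
Qed.

End DriftToPoint.

Section L1Convergence.
Variables (A : pred T) (pi mu : T -> R) (y0 : T) (k : nat) (dl : R).
Hypothesis A_closed : forall x y, A x -> ~~ A y -> K x y = 0.
Hypothesis pi_stationary : mc_step pi = pi.
Hypothesis pi_supp : forall x, ~~ A x -> pi x = 0.
Hypothesis mu_supp : forall x, ~~ A x -> mu x = 0.
Hypothesis mu_pi_mass : \sum_x mu x = \sum_x pi x.
Hypothesis minorization : forall x, A x -> dl <= mc_law (point_mass x) k y0.
Hypothesis dl_gt0 : 0 < dl.
Hypothesis dl_le1 : dl <= 1.

Lemma mc_law_supp nu t y : (forall x, ~~ A x -> nu x = 0) -> ~~ A y -> mc_law nu t y = 0.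
Proof.
move=> nu_supp; elim: t y => [|t IH] y nAy; first exact: nu_supp.
rewrite mc_lawS /mc_step big1 // => x _; have [Ax|nAx] := boolP (A x).
  by rewrite A_closed ?mulr0.
by rewrite IH ?mul0r.
Qed.

Theorem mc_law_cvg_l1 : \sum_y `|mc_law mu t y - pi y| @[t --> \oo] --> 0.
Proof.
pose nu x := mu x - pi x; pose D t := \sum_y `|mc_law nu t y|.
have DE t : \sum_y `|mc_law mu t y - pi y| = D t.
  by rewrite /D; apply: eq_bigr => y _; rewrite mc_lawB (mc_law_stationary _ pi_stationary).
have nu_supp x : ~~ A x -> nu x = 0 by move=> nAx; rewrite /nu mu_supp ?pi_supp ?subrr.
have D_contr t : D (k + t)%N <= (1 - dl) * D t.
  rewrite /D; under eq_bigr => y _ do rewrite mc_lawD.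
  apply: (doeblin_contraction minorization) => [x|]; first exact: mc_law_supp.
  by rewrite mc_law_sum sumrB mu_pi_mass subrr.
have D_geom n : D (n * k)%N <= (1 - dl) ^+ n * D 0.
  elim: n => [|n IH]; first by rewrite mul0n expr0 mul1r.
  rewrite mulSn exprS -mulrA; apply: le_trans (D_contr _) _.
  by rewrite ler_wpM2l ?subr_ge0.
have geom_cvg : (1 - dl) ^+ n * D 0 @[n --> \oo] --> 0.
  rewrite -(mul0r (D 0)); apply: cvgM (cvg_cst _); apply: cvg_expr.
  by rewrite ger0_norm ?subr_ge0 // ltrBlDr ltrDl.
apply/cvgr0Pnorm_le => eps eps_gt0.
move/cvgr0Pnorm_le: geom_cvg => /(_ eps eps_gt0) [n _ Hn].
exists (n * k)%N => // t /= le_nk_t; rewrite DE ger0_norm ?sumr_ge0 //.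
apply: le_trans (mc_law_l1_nonincr _ le_nk_t) (le_trans (D_geom n) _).
by apply: le_trans (Hn n (leqnn n)); apply: ler_norm.
Qed.

End L1Convergence.

End FiniteMarkovChain.

Lemma cvg_marginal_of_l1 (R : realType) (T : finType) (mu : nat -> T -> R)
    (pi : T -> R) (P : pred T) :
  \sum_y `|mu t y - pi y| @[t --> \oo] --> 0 ->
  \sum_(y | P y) mu t y @[t --> \oo] --> \sum_(y | P y) pi y.
Proof.
move=> l1_cvg; apply/cvgrPdist_le => eps eps_gt0.
move/cvgr0Pnorm_le: l1_cvg => /(_ eps eps_gt0); apply: filterS => t.
rewrite ger0_norm ?sumr_ge0 // => l1_le_eps; apply: le_trans l1_le_eps.
rewrite -sumrB; apply: le_trans (ler_norm_sum _ _ _) _.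
rewrite [leRHS](bigID P) /= -[leLHS]addr0 lerD ?sumr_ge0 //.
by apply: ler_sum => y _; rewrite distrC.
Qed.

Section ExchangeModel.
Variables (R : realType) (V : finType) (e : rel V) (M : nat).
Hypothesis e_irr : irreflexive e.
Local Notation K := (@iem_kernel R V e M).

Lemma edge_neq p : p \in edges e -> p.1 != p.2.
Proof. by rewrite inE; apply: contraTneq => ->; rewrite e_irr. Qed.

Lemma sum_split2 (F : V -> nat) a b : a != b ->
  (\sum_z F z = F a + F b + \sum_(z | (z != a) && (z != b)) F z)%N.
Proof. by move=> ab; rewrite (bigD1 a) //= (bigD1 b) 1?eq_sym //= addnA. Qed.

Lemma in_CNM_pair_le (xi : conf V M) a b : in_CNM xi -> a != b -> (xi a + xi b <= M)%N.
Proof.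
move=> /eqP xi_sum ab; rewrite -[leqRHS]xi_sum (sum_split2 (fun z => (xi z : nat)) ab).
exact: leq_addr.
Qed.

Section Update.
Variables (xi : conf V M) (a b : V) (u1 u2 : nat).
Hypotheses (xi_in : in_CNM xi) (ab : a != b) (u1_le : (u1 <= xi a)%N) (u2_le : (u2 <= xi b)%N).

Lemma upd_coords :
  [/\ (upd xi a b u1 u2 a : nat) = (xi a - u1 + u2)%N,
      (upd xi a b u1 u2 b : nat) = (xi b - u2 + u1)%N
    & forall z, z != a -> z != b -> upd xi a b u1 u2 z = xi z].
Proof.
have pair_le := in_CNM_pair_le xi_in ab; split=> [||z za zb]; rewrite ffunE ?eqxx.
- by rewrite inordK //; lia.
- by rewrite eq_sym (negbTE ab) inordK //; lia.
- by rewrite (negbTE za) (negbTE zb).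
Qed.

Lemma upd_in_CNM : in_CNM (upd xi a b u1 u2).
Proof.
have [upd_a upd_b upd_z] := upd_coords.
rewrite /in_CNM (sum_split2 _ ab) upd_a upd_b.
under eq_bigr => z /andP[za zb] do rewrite upd_z //.
have -> : (xi a - u1 + u2 + (xi b - u2 + u1) = xi a + xi b)%N by lia.
by rewrite -sum_split2.
Qed.

Lemma upd_reverse :
  [&& (u2 <= upd xi a b u1 u2 a)%N, (u1 <= upd xi a b u1 u2 b)%N &
      upd (upd xi a b u1 u2) a b u2 u1 == xi].
Proof.
have [upd_a upd_b upd_z] := upd_coords; have xi_le := in_CNM_pair_le xi_in ab.
rewrite upd_a upd_b !leq_addl /=; apply/eqP/ffunP => z; rewrite ffunE.
have [-> | za] := eqVneq z a; first by apply: val_inj; rewrite /= upd_a inordK; lia.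
have [-> | zb] := eqVneq z b; first by apply: val_inj; rewrite /= upd_b inordK; lia.
exact: upd_z.
Qed.

End Update.

Lemma upd00 (xi : conf V M) a b : upd xi a b 0 0 = xi.
Proof.
by apply/ffunP => z; rewrite ffunE !subn0 !addn0; do 2?case: eqP => [->|_]; rewrite ?inord_val.
Qed.

Definition exch_kernel (xi eta : conf V M) (a b : V) : R :=
  \sum_(u1 < (xi a).+1) \sum_(u2 < (xi b).+1)
    (((xi a).+1 * (xi b).+1)%N%:R)^-1 * (upd xi a b u1 u2 == eta)%:R.

Lemma iem_kernelE xi eta :
  K xi eta = (#|edges e|%:R)^-1 * \sum_(p in edges e) exch_kernel xi eta p.1 p.2.
Proof. by []. Qed.

Lemma exch_kernel_ge0 xi eta a b : 0 <= exch_kernel xi eta a b.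
Proof. by do 2!(apply: sumr_ge0 => ? _); rewrite mulr_ge0 ?invr_ge0 ?ler0n. Qed.

Lemma exch_kernel_sum1 xi a b : \sum_eta exch_kernel xi eta a b = 1.
Proof.
pose c : R := (((xi a).+1 * (xi b).+1)%N%:R)^-1.
transitivity (\sum_(u1 < (xi a).+1) \sum_(u2 < (xi b).+1) c).
  rewrite exchange_big; apply: eq_bigr => u1 _; rewrite exchange_big; apply: eq_bigr => u2 _.
  rewrite -mulr_sumr (bigD1 (upd xi a b u1 u2)) //= eqxx big1 ?addr0 ?mulr1 // => eta.
  by rewrite eq_sym => /negbTE ->.
by rewrite !sumr_const !card_ord -mulrnA -mulr_natr mulnC mulVf // pnatr_eq0.
Qed.

Lemma iem_kernel_ge0 xi eta : 0 <= K xi eta.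
Proof.
by rewrite iem_kernelE mulr_ge0 ?invr_ge0 ?ler0n ?sumr_ge0 // => p _; apply: exch_kernel_ge0.
Qed.

Lemma iem_kernel_sum1 : (0 < #|edges e|)%N -> forall xi, \sum_eta K xi eta = 1.
Proof.
move=> edges_gt0 xi; under eq_bigr => eta _ do rewrite iem_kernelE.
rewrite -mulr_sumr exchange_big /=; under eq_bigr => p _ do rewrite exch_kernel_sum1.
by rewrite sumr_const -mulr_natr mul1r mulVf // pnatr_eq0 -lt0n.
Qed.

Lemma iem_kernel_out xi eta : in_CNM xi -> ~~ in_CNM eta -> K xi eta = 0.
Proof.
move=> xi_in eta_out; rewrite iem_kernelE big1 ?mulr0 // => p pE.
rewrite /exch_kernel big1 // => u1 _; rewrite big1 // => u2 _.
case: eqP => [upd_eta|_]; last by rewrite mulr0.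
by move: eta_out; rewrite -upd_eta upd_in_CNM ?edge_neq // -ltnS.
Qed.

Definition min_move_prob : R := (#|edges e|%:R)^-1 * ((M.+1 * M.+1)%N%:R)^-1.

Lemma min_move_prob_gt0 : (0 < #|edges e|)%N -> 0 < min_move_prob.
Proof. by move=> edges_gt0; rewrite mulr_gt0 // invr_gt0 ltr0n // muln_gt0. Qed.

Lemma min_move_prob_le1 : (0 < #|edges e|)%N -> min_move_prob <= 1.
Proof.
by move=> edges_gt0; rewrite mulr_ile1 ?invr_ge0 ?ler0n // invf_le1 ?ler1n ?ltr0n ?muln_gt0.
Qed.

Lemma iem_kernel_upd_ge (xi : conf V M) p (u1 u2 : nat) : p \in edges e ->
  (u1 <= xi p.1)%N -> (u2 <= xi p.2)%N -> min_move_prob <= K xi (upd xi p.1 p.2 u1 u2).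
Proof.
move=> pE u1_le u2_le; rewrite iem_kernelE ler_wpM2l ?invr_ge0 ?ler0n //.
apply: le_trans (ler_sum_term pE (fun q _ => exch_kernel_ge0 _ _ _ _)).
rewrite /exch_kernel; set c := ((xi p.1).+1 * (xi p.2).+1)%N.
have term_ge0 (v1 v2 : nat) :
    0 <= c%:R^-1 * (upd xi p.1 p.2 v1 v2 == upd xi p.1 p.2 u1 u2)%:R :> R.
  by rewrite mulr_ge0 ?invr_ge0 ?ler0n.
apply: le_trans (ler_sum_term (P := xpredT) (i := Ordinal (u1_le : (u1 < (xi p.1).+1)%N)) _
  (fun v1 _ => sumr_ge0 _ (fun (v2 : 'I_(xi p.2).+1) _ => term_ge0 v1 v2))) => //=.
apply: le_trans (ler_sum_term (P := xpredT) (i := Ordinal (u2_le : (u2 < (xi p.2).+1)%N)) _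
  (fun v2 _ => term_ge0 u1 v2)) => //=.
rewrite eqxx mulr1 lef_pV2 ?posrE ?ltr0n ?muln_gt0 // ler_nat.
by apply: leq_mul; rewrite ltnS -ltnS ltn_ord.
Qed.

End ExchangeModel.

Section StationaryLaw.
Variables (R : realType) (V : finType) (e : rel V) (M : nat).
Hypothesis e_irr : irreflexive e.
Local Notation K := (@iem_kernel R V e M).

Definition iem_weight (xi : conf V M) : R := \prod_z ((xi z).+1)%:R.

Definition exch_match (xi eta : conf V M) (a b : V) (u1 u2 : nat) : bool :=
  [&& (u1 <= xi a)%N, (u2 <= xi b)%N & upd xi a b u1 u2 == eta].

Lemma exch_kernel_widen xi eta a b :
  exch_kernel R xi eta a b = (((xi a).+1 * (xi b).+1)%N%:R)^-1 *
    \sum_(u1 < M.+1) \sum_(u2 < M.+1) (exch_match xi eta a b u1 u2)%:R.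
Proof.
pose F (u1 u2 : nat) : R := (upd xi a b u1 u2 == eta)%:R.
transitivity ((((xi a).+1 * (xi b).+1)%N%:R)^-1 *
    \sum_(u1 < (xi a).+1) \sum_(u2 < (xi b).+1) F u1 u2).
  by rewrite /exch_kernel mulr_sumr; apply: eq_bigr => u1 _; rewrite mulr_sumr.
congr (_ * _); rewrite (big_ord_widen M.+1 (fun u1 => \sum_(u2 < (xi b).+1) F u1 u2)) //.
rewrite big_mkcond; apply: eq_bigr => u1 _; rewrite /exch_match ltnS.
case: leqP => [u1_le|_]; last by rewrite big1.
rewrite (big_ord_widen M.+1 (F u1)) // big_mkcond; apply: eq_bigr => u2 _.
by rewrite ltnS; case: leqP.
Qed.

Lemma exch_match_sym xi eta a b u1 u2 : in_CNM xi -> in_CNM eta -> a != b ->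
  exch_match xi eta a b u1 u2 = exch_match eta xi a b u2 u1.
Proof.
move=> xi_in eta_in ab; rewrite /exch_match.
by apply/idP/idP => /and3P[u_le v_le /eqP <-]; apply: upd_reverse.
Qed.

Lemma exch_detailed_balance xi eta a b : in_CNM xi -> in_CNM eta -> a != b ->
  iem_weight xi * exch_kernel R xi eta a b = iem_weight eta * exch_kernel R eta xi a b.
Proof.
move=> xi_in eta_in ab.
pose rest (zeta : conf V M) : R := \prod_(z | (z != a) && (z != b)) ((zeta z).+1)%:R.
have weightE zeta : iem_weight zeta *
    (((zeta a).+1 * (zeta b).+1)%N%:R)^-1 = rest zeta.
  rewrite /iem_weight (bigD1 a) //= (bigD1 b) 1?eq_sym //= mulrA -natrM mulrAC mulfV ?mul1r //.
  by rewrite pnatr_eq0.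
rewrite !exch_kernel_widen !mulrA !weightE !mulr_sumr.
under eq_bigr do rewrite mulr_sumr; under [RHS]eq_bigr do rewrite mulr_sumr.
rewrite [RHS]exchange_big /=; apply: eq_bigr => u1 _; apply: eq_bigr => u2 _.
rewrite exch_match_sym //; case: (boolP (exch_match _ _ _ _ _ _)) => [|_]; last by rewrite !mulr0.
case/and3P=> u1_le u2_le /eqP <-; congr (_ * _); apply: eq_bigr => z /andP[za zb].
by have [_ _ ->] := upd_coords eta_in ab u1_le u2_le.
Qed.

Lemma iem_detailed_balance xi eta : in_CNM xi -> in_CNM eta ->
  iem_weight xi * K xi eta = iem_weight eta * K eta xi.
Proof.
move=> xi_in eta_in; rewrite !iem_kernelE mulrCA [RHS]mulrCA !mulr_sumr.
by apply: eq_bigr => p pE; rewrite exch_detailed_balance // (edge_neq e_irr pE).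
Qed.

Lemma iem_weight_gt0 xi : 0 < iem_weight xi.
Proof. by apply: prodr_gt0 => z _; rewrite ltr0n. Qed.

Definition iem_partition : R := \sum_(xi | in_CNM xi) iem_weight xi.

Definition iem_pi (eta : conf V M) : R :=
  if in_CNM eta then iem_weight eta / iem_partition else 0.

Lemma iem_pi_out eta : ~~ in_CNM eta -> iem_pi eta = 0.
Proof. by rewrite /iem_pi => /negbTE ->. Qed.

Lemma iem_pi_sum (xi0 : conf V M) : in_CNM xi0 -> \sum_eta iem_pi eta = 1.
Proof.
move=> xi0_in; rewrite /iem_pi -big_mkcond /= -mulr_suml mulfV // gt_eqF //.
apply: lt_le_trans (iem_weight_gt0 xi0) _.
exact: ler_sum_term xi0_in (fun _ _ => ltW (iem_weight_gt0 _)).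
Qed.

Lemma iem_pi_balance xi eta : iem_pi xi * K xi eta = iem_pi eta * K eta xi.
Proof.
rewrite /iem_pi; case: (boolP (in_CNM xi)) => xi_in; case: (boolP (in_CNM eta)) => eta_in.
- by rewrite mulrAC iem_detailed_balance // mulrAC.
- by rewrite (iem_kernel_out _ e_irr xi_in eta_in) mulr0 mul0r.
- by rewrite (iem_kernel_out _ e_irr eta_in xi_in) mulr0 mul0r.
- by rewrite !mul0r.
Qed.

Lemma iem_pi_stationary : (0 < #|edges e|)%N -> mc_step K iem_pi = iem_pi.
Proof.
move=> edges_gt0.
exact: detailed_balance_stationary (iem_kernel_sum1 R edges_gt0) _ iem_pi_balance.
Qed.

End StationaryLaw.

Section DistanceToPoint.
Variables (V : finType) (e : rel V) (x0 : V).
Hypothesis e_conn : forall y, connect e y x0.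

Lemma exists_path_size y :
  exists n, [exists p : n.-tuple V, path e y p && (last y p == x0)].
Proof.
have /connectP [p p_path p_last] := e_conn y.
by exists (size p); apply/existsP; exists (in_tuple p); rewrite p_path p_last eqxx.
Qed.

Definition dist_to y : nat := ex_minn (exists_path_size y).

Lemma dist_to_x0 : dist_to x0 = 0%N.
Proof.
rewrite /dist_to; case: ex_minnP => n _ n_min; apply/eqP; rewrite -leqn0.
by apply: n_min; apply/existsP; exists [tuple]; rewrite /= eqxx.
Qed.

Lemma dist_to_decr y : y != x0 -> exists2 z, e y z & (dist_to z < dist_to y)%N.
Proof.
move=> y_neq_x0; rewrite {2}/dist_to; case: ex_minnP => [[|n]].
  by case/existsP=> p; rewrite tuple0 /= => /eqP y_x0; rewrite y_x0 eqxx in y_neq_x0.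
case/existsP=> p; case/tupleP: p => z p /= /andP[/andP[e_yz p_path] p_last] _.
exists z => //; rewrite /dist_to ltnS; case: ex_minnP => m _; apply.
by apply/existsP; exists p; rewrite p_path p_last.
Qed.

End DistanceToPoint.

Section Reachability.
Variables (R : realType) (V : finType) (e : rel V) (M : nat) (x0 : V).
Hypothesis e_irr : irreflexive e.
Hypothesis e_conn : forall y, connect e y x0.
Local Notation K := (@iem_kernel R V e M).
Local Notation dist := (dist_to e_conn).

Definition all_at : conf V M := [ffun z => if z == x0 then ord_max else ord0].

Definition potential (xi : conf V M) : nat := \sum_z xi z * dist z.

Lemma all_atP (xi : conf V M) :
  in_CNM xi -> (forall y, y != x0 -> xi y = 0 :> nat) -> xi = all_at.
Proof.
move=> xi_in xi_off; apply/ffunP => z; apply: val_inj; rewrite ffunE.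
have [-> | z_neq_x0] := eqVneq z x0; last exact: xi_off.
by move: xi_in; rewrite /in_CNM (bigD1 x0) //= big1 ?addn0 => [/eqP|].
Qed.

Lemma potential_all_at : potential all_at = 0%N.
Proof.
rewrite /potential big1 // => z _; rewrite ffunE.
by case: eqVneq => [->|_]; rewrite ?dist_to_x0 ?muln0.
Qed.

Lemma potential_le (xi : conf V M) : (potential xi <= M * \sum_z dist z)%N.
Proof. by rewrite big_distrr leq_sum // => z _; rewrite leq_mul2r -ltnS ltn_ord orbT. Qed.

(* The witness moves all the coins of some vertex [y != x0] to a neighbour of [y] closer to [x0]. *)
Lemma iem_descent (xi : conf V M) : in_CNM xi -> xi != all_at ->
  exists2 xi', in_CNM xi' & (min_move_prob R e M <= K xi xi') && (potential xi' < potential xi)%N.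
Proof.
move=> xi_in xi_neq; have [y /andP[y_neq_x0 y_coins]] : exists y, (y != x0) && (0 < xi y)%N.
  apply/existsP; apply: contraR xi_neq => /existsPn no_coins; apply/eqP/all_atP => // y y_neq.
  by apply/eqP; move: (no_coins y); rewrite y_neq lt0n negbK.
have [z e_yz dist_zy] := dist_to_decr e_conn y_neq_x0.
have yz : y != z by apply: contraTneq e_yz => ->; rewrite e_irr.
have yzE : (y, z) \in edges e by rewrite inE.
exists (upd xi y z (xi y) 0); first exact: upd_in_CNM.
rewrite (iem_kernel_upd_ge _ yzE) //=.
have [upd_y upd_z upd_off] := upd_coords xi_in yz (leqnn (xi y)) (leq0n (xi z)).
rewrite /potential (sum_split2 _ yz) [ltnRHS](sum_split2 _ yz) upd_y upd_z subnn.
under eq_bigr => w /andP[wy wz] do rewrite upd_off //.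
rewrite subn0; nia.
Qed.

Lemma iem_kernel_hold_ge p : p \in edges e -> min_move_prob R e M <= K all_at all_at.
Proof. by move=> pE; rewrite -{2}(upd00 all_at p.1 p.2) iem_kernel_upd_ge. Qed.

Lemma iem_minorization p (xi : conf V M) : p \in edges e -> in_CNM xi ->
  min_move_prob R e M ^+ (M * \sum_z dist z)%N <=
    mc_law K (point_mass R xi) (M * \sum_z dist z)%N all_at.
Proof.
move=> pE xi_in; have edges_gt0 : (0 < #|edges e|)%N by apply/card_gt0P; exists p.
apply: (mc_law_point_ge_pow (@iem_kernel_ge0 R V e M) (A := @in_CNM V M)) => //.
- exact: ltW (min_move_prob_gt0 _ _ edges_gt0).
- exact: potential_all_at.
- exact: iem_kernel_hold_ge pE.
- by move=> zeta zeta_in /iem_descent; apply.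
- exact: potential_le.
Qed.

End Reachability.

Lemma sum_bin_diag r m :
  (\sum_(i < m.+1) 'C(m - i + r, r) = 'C(m + r.+1, r.+1))%N.
Proof.
elim: m => [|m IH]; first by rewrite big_ord1 !add0n !binn.
rewrite big_ord_recl subn0; under eq_bigr => i _ do rewrite lift0 subSS.
by rewrite IH addSnnS [in RHS]addSn binS addnC.
Qed.

Lemma sum_succ_mul_bin_diag r m :
  (\sum_(i < m.+1) i.+1 * 'C(m - i + r, r) = 'C(m + r.+2, r.+2))%N.
Proof.
elim: m => [|m IH]; first by rewrite big_ord1 !add0n !binn.
rewrite big_ord_recl subn0 mul1n; under eq_bigr => i _ do rewrite lift0 subSS mulSn.
rewrite big_split IH sum_bin_diag.
have -> : (m.+1 + r.+2 = (m + r.+1).+2)%N by lia.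
rewrite binS (binS (m + r.+1) r) -addnS addSnnS /=; lia.
Qed.

Section WeightCounting.
Variables (R : realType) (V : finType) (M : nat).

Lemma coef_prod_sum_monomials (a : V -> nat -> R) :
  (\prod_z \sum_(j < M.+1) a z j *: 'X^j)`_M =
    \sum_(xi : conf V M | in_CNM xi) \prod_z a z (xi z).
Proof.
rewrite bigA_distr_bigA coef_sum [RHS]big_mkcond /=; apply: eq_bigr => xi _.
rewrite scaler_prod prodrXr coefZ coefXn /in_CNM eq_sym.
by case: eqP; rewrite ?mulr1 ?mulr0.
Qed.

(* The truncation at degree [M] of [(1 - X)^-2]. *)
Definition weight_poly : {poly R} := \sum_(j < M.+1) (j.+1)%:R *: 'X^j.

Lemma coef_weight_poly i : (i <= M)%N -> weight_poly`_i = (i.+1)%:R.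
Proof.
move=> i_le; rewrite /weight_poly coef_sum (bigD1 (Ordinal (i_le : (i < M.+1)%N))) //=.
rewrite coefZ coefXn eqxx mulr1 big1 ?addr0 // => j; rewrite -val_eqE /= => /negbTE j_neq_i.
by rewrite coefZ coefXn eq_sym j_neq_i mulr0.
Qed.

Lemma coef_weight_poly_exp n m : (m <= M)%N ->
  (weight_poly ^+ n.+1)`_m = ('C(m + (2 * n).+1, (2 * n).+1))%:R.
Proof.
elim: n m => [|n IH] m m_le; first by rewrite expr1 coef_weight_poly // muln0 bin1 addn1.
have -> : ((2 * n.+1).+1 = (2 * n).+3)%N by lia.
rewrite exprS coefM -sum_succ_mul_bin_diag natr_sum.
apply: eq_bigr => i _; have i_le : (i <= M)%N by apply: leq_trans m_le; rewrite -ltnS.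
by rewrite coef_weight_poly // IH ?natrM // (leq_trans (leq_subr _ _)).
Qed.

Lemma iem_partitionE n : #|V| = n.+1 ->
  iem_partition R V M = ('C(M + (2 * n).+1, (2 * n).+1))%:R.
Proof.
move=> card_V; rewrite /iem_partition /iem_weight.
rewrite -(coef_prod_sum_monomials (fun _ j => (j.+1)%:R)) prodr_const card_V.
exact: coef_weight_poly_exp.
Qed.

Lemma iem_weight_marginal x c n : (c <= M)%N -> #|V| = n.+2 ->
  \sum_(xi : conf V M | in_CNM xi && ((xi x : nat) == c)) iem_weight R xi =
    (c.+1 * 'C(M - c + (2 * n).+1, (2 * n).+1))%N%:R.
Proof.
move=> c_le card_V.
pose a z (j : nat) : R := if z == x then (j == c)%:R * (j.+1)%:R else (j.+1)%:R.
have prod_a (xi : conf V M) : \prod_z a z (xi z) = ((xi x : nat) == c)%:R * iem_weight R xi.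
  rewrite /iem_weight (bigD1 x) // [in RHS](bigD1 x) //= {1}/a eqxx -mulrA; congr (_ * (_ * _)).
  by apply: eq_bigr => z /negbTE z_neq_x; rewrite /a z_neq_x.
transitivity (\sum_(xi : conf V M | in_CNM xi) \prod_z a z (xi z)).
  by rewrite big_mkcondr; apply: eq_bigr => xi _; rewrite prod_a; case: eqP; rewrite ?mul1r ?mul0r.
rewrite -coef_prod_sum_monomials (bigD1 x) //=.
rewrite [X in _ * X](eq_bigr (fun _ => weight_poly)); last first.
  by move=> z /negbTE z_neq_x; rewrite /a z_neq_x.
rewrite prodr_const cardC1 card_V /a eqxx (bigD1 (Ordinal (c_le : (c < M.+1)%N))) //= eqxx mul1r.
rewrite big1 ?addr0 => [|j]; last by rewrite -val_eqE /= => /negbTE ->; rewrite mul0r scale0r.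
by rewrite -scalerAl coefZ coefXnM ltnNge c_le /= coef_weight_poly_exp ?leq_subr // natrM.
Qed.

Lemma iem_pi_marginal x c : (c <= M)%N -> (1 < #|V|)%N ->
  \sum_(eta : conf V M | (eta x : nat) == c) iem_pi R eta =
    ((c.+1 * 'C((M - c) + (2 * #|V| - 3), 2 * #|V| - 3))%N%:R
       / ('C(M + 2 * #|V| - 1, 2 * #|V| - 1))%N%:R).
Proof.
move=> c_le N_gt1; have [n card_V] : exists n, #|V| = n.+2 by exists (#|V| - 2)%N; lia.
have -> : (2 * #|V| - 3 = (2 * n).+1)%N by rewrite card_V; lia.
have -> : (2 * #|V| - 1 = (2 * n.+1).+1)%N by rewrite card_V; lia.
have -> : (M + 2 * #|V| - 1 = M + (2 * n.+1).+1)%N by rewrite card_V; lia.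
rewrite /iem_pi -big_mkcondr -mulr_suml (eq_bigl _ _ (fun eta => andbC _ _)) /=.
by rewrite (iem_weight_marginal x c_le card_V) (iem_partitionE card_V).
Qed.

End WeightCounting.

Lemma iem_lawE (R : realType) (V : finType) (e : rel V) (M : nat) (xi0 : conf V M) :
  iem_law R e xi0 = mc_law (@iem_kernel R V e M) (point_mass R xi0).
Proof.
apply: funext => t; elim: t => [|t IH] //; apply: funext => eta.
by rewrite mc_lawS /= IH.
Qed.

Section Convergence.
Variables (R : realType) (V : finType) (e : rel V) (M : nat).
Hypothesis e_irr : irreflexive e.
Hypothesis e_conn : forall x y : V, connect e x y.
Hypothesis N_gt1 : (1 < #|V|)%N.

Lemma exists_edge : exists p, p \in edges e.
Proof.
have /card_gt1P [x [y [_ _ x_neq_y]]] := N_gt1.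
have /connectP [[|z p] /= xp_path y_last] := e_conn x y; first by rewrite y_last eqxx in x_neq_y.
by exists (x, z); rewrite inE; case/andP: xp_path.
Qed.

Theorem iem_law_cvg_l1 (xi0 : conf V M) : in_CNM xi0 ->
  \sum_eta `|iem_law R e xi0 t eta - iem_pi R eta| @[t --> \oo] --> 0.
Proof.
move=> xi0_in; have [p pE] := exists_edge.
have edges_gt0 : (0 < #|edges e|)%N by apply/card_gt0P; exists p.
have conn_to_p1 y : connect e y p.1 by apply: e_conn.
have move_prob_gt0 := min_move_prob_gt0 R M edges_gt0.
pose k := (M * \sum_z dist_to conn_to_p1 z)%N.
rewrite iem_lawE; apply: (mc_law_cvg_l1 (@iem_kernel_ge0 R V e M) (iem_kernel_sum1 R edges_gt0)
  (A := @in_CNM V M) (y0 := all_at M p.1) (k := k) (dl := min_move_prob R e M ^+ k)).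
- exact: iem_kernel_out.
- exact: iem_pi_stationary.
- exact: iem_pi_out.
- by move=> xi xi_out; rewrite /point_mass; case: eqVneq xi_out => // ->; rewrite xi0_in.
- by rewrite sum_point_mass (iem_pi_sum _ xi0_in).
- by move=> xi; apply: iem_minorization pE.
- by rewrite exprn_gt0.
- by rewrite exprn_ile1 ?(ltW move_prob_gt0) ?min_move_prob_le1.
Qed.

End Convergence.

Unset Implicit Arguments.

Theorem theorem2 (R : realType) (V : finType) (e : rel V)
  (e_sym : symmetric e) (e_irr : irreflexive e)
  (e_conn : forall x y : V, connect e x y)
  (N_ge2 : (1 < #|V|)%N) (M : nat) (xi0 : conf V M) (xi0C : in_CNM xi0)
  (x : V) (c : nat) (cM : (c <= M)%N) :
  iem_prob R e xi0 x c t @[t --> \oo] -->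
    ((c.+1 * 'C((M - c) + (2 * #|V| - 3), 2 * #|V| - 3))%N%:R
       / ('C(M + 2 * #|V| - 1, 2 * #|V| - 1))%N%:R : R).
Proof.
rewrite -(iem_pi_marginal R x cM N_ge2).
exact: cvg_marginal_of_l1 (iem_law_cvg_l1 e_irr e_conn N_ge2 xi0C).
Qed.
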